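(* Let $\Sigma$ be a finite nonempty set and let $\{(A_i,B_i)\in\mathbb{R}^{n\times n}\times\mathbb{R}^{n\times m} : i\in\Sigma\}$ be given. The switched control system $x(k+1)=A_{\sigma(k)}x(k)+B_{\sigma(k)}u(k)$ is mode-independent feedback stabilizable (IFS) if and only if it is current-mode-independent memory-feedback stabilizable (IFS$_m$).
   Context: Let $\Sigma$ be a finite nonempty set (alphabet) and $\{(A_i,B_i)\in\mathbb{R}^{n\times n}\times\mathbb{R}^{n\times m} : i\in\Sigma\}$. Consider the discrete-time switched control system $x(k+1)=A_{\sigma(k)}x(k)+B_{\sigma(k)}u(k)$, $k\in\mathbb{N}=\{0,1,2,\dots\}$, where the switching signal $\sigma:\mathbb{N}\to\Sigma$ is arbitrary (the set of all such signals is denoted $\Sigma^\omega$) and $u(k)\in\mathbb{R}^m$ is the control. $\|\cdot\|$ is the Euclidean norm. Let $\mathcal{H}$ be the set of all tuples $(x_k,\dots,x_0;\,i_k,\dots,i_0)$ with $k\in\mathbb{N}$, $x_j\in\mathbb{R}^n$, $i_j\in\Sigma$ (state string and mode string of equal length $k+1$), and let $\mathcal{H}_-$ be the set of all tuples $(x_k,\dots,x_0;\,i_{k-1},\dots,i_0)$ with $k\in\mathbb{N}$ (mode string one shorter than the state string; empty when $k=0$). Controllers are arbitrary functions (no regularity assumed) of the following kinds, each determining, for every $x_0\in\mathbb{R}^n$ and $\sigma\in\Sigma^\omega$, a unique closed-loop trajectory with $x(0)=x_0$: (1) static mode-independent $\Phi:\mathbb{R}^n\to\mathbb{R}^m$,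 with $u(k)=\Phi(x(k))$; (1)$^d$ static mode-dependent $\Phi_d:\Sigma\times\mathbb{R}^n\to\mathbb{R}^m$, with $u(k)=\Phi_d(\sigma(k),x(k))$; (2) current-mode-independent with memory $\Psi:\mathcal{H}_-\to\mathbb{R}^m$, with $u(k)=\Psi(x(k),\dots,x(0);\,\sigma(k-1),\dots,\sigma(0))$; (2)$^d$ current-mode-dependent with memory $\Psi_d:\mathcal{H}\to\mathbb{R}^m$, with $u(k)=\Psi_d(x(k),\dots,x(0);\,\sigma(k),\dots,\sigma(0))$. The closed loop is uniformly exponentially stable (UES) if there exist $M>0$ and $\gamma\in[0,1)$ such that $\|x(k)\|\le M\gamma^k\|x_0\|$ for all $x_0\in\mathbb{R}^n$, all $\sigma\in\Sigma^\omega$ and all $k\in\mathbb{N}$. The system is called IFS, DFS, IFS$_m$, DFS$_m$ if there exists a controller of kind (1), (1)$^d$, (2), (2)$^d$ respectively such that the closed loop is UES. *)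

From HB Require Import structures.
From mathcomp Require Import all_boot all_order all_algebra.
From mathcomp Require Import reals.
Set Implicit Arguments. Unset Strict Implicit. Unset Printing Implicit Defensive.
Import Order.TTheory GRing.Theory Num.Theory.
Local Open Scope ring_scope.

Section SwitchedSystems.
Variables (R : realType) (Sigma : finType) (n m : nat).
Variables (A : Sigma -> 'M[R]_n) (B : Sigma -> 'M[R]_(n, m)).

Definition eucl_norm (x : 'cV[R]_n) : R := Num.sqrt (\sum_(i < n) x i 0 ^+ 2).

Definition modes_upto (sigma : nat -> Sigma) (k : nat) : seq Sigma :=
  rev (mkseq sigma k).

Fixpoint traj_static (Phi : 'cV[R]_n -> 'cV[R]_m) (x0 : 'cV[R]_n)
    (sigma : nat -> Sigma) (k : nat) : 'cV[R]_n :=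
  match k with
  | 0 => x0
  | k'.+1 => let x := traj_static Phi x0 sigma k' in
             A (sigma k') *m x + B (sigma k') *m Phi x
  end.

(* (2) current-mode-independent with memory:
   u(k) = Psi (x(k), ..., x(0); sigma(k-1), ..., sigma(0)).
   Histories are stored as seqs [:: x(k); ...; x(0)]. *)
Fixpoint hist_mem (Psi : seq 'cV[R]_n -> seq Sigma -> 'cV[R]_m)
    (x0 : 'cV[R]_n) (sigma : nat -> Sigma) (k : nat) : seq 'cV[R]_n :=
  match k with
  | 0 => [:: x0]
  | k'.+1 => let h := hist_mem Psi x0 sigma k' in
             let x := head x0 h in
             (A (sigma k') *m x + B (sigma k') *m Psi h (modes_upto sigma k')) :: h
  end.

Definition traj_mem Psi x0 sigma k : 'cV[R]_n := head x0 (hist_mem Psi x0 sigma k).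

Definition UES (traj : 'cV[R]_n -> (nat -> Sigma) -> nat -> 'cV[R]_n) : Prop :=
  exists M : R, exists gamma : R, 0 < M /\ 0 <= gamma < 1 /\
    forall (x0 : 'cV[R]_n) (sigma : nat -> Sigma) (k : nat),
      eucl_norm (traj x0 sigma k) <= M * gamma ^+ k * eucl_norm x0.

Definition IFS : Prop := exists Phi : 'cV[R]_n -> 'cV[R]_m, UES (traj_static Phi).

Definition IFS_m : Prop :=
  exists Psi : seq 'cV[R]_n -> seq Sigma -> 'cV[R]_m, UES (traj_mem Psi).

End SwitchedSystems.

(* Ignoring the memory turns a static feedback into a memory feedback.  Conversely, given a
   memory feedback with decay rate [gamma], let [cost x] be the infimum of the constants [b]
   for which some memory feedback started at [x] keeps [|x(k)| <= b gamma^k] under every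
   switching signal.  Since the first input [Psi (x; )] of such a feedback does not depend
   on the current mode, the same input works for every mode [i], and the memory feedback
   shifted by one step witnesses [cost (A_i x + B_i u) <= gamma b].  Taking [b] close to
   [cost x] yields a static feedback along which [cost] contracts by a factor
   [2 gamma / (1 + gamma) < 1]; as [|x| <= cost x <= M |x|], this feedback is UES. *)
From mathcomp Require Import all_boot all_order all_algebra.
From mathcomp Require Import reals.
From mathcomp Require Import boolp classical_sets.
Set Implicit Arguments. Unset Strict Implicit. Unset Printing Implicit Defensive.
Import Order.TTheory GRing.Theory Num.Theory.
Local Open Scope ring_scope.

Section EuclNorm.
Variables (R : realType) (n : nat).

Lemma eucl_norm_ge0 (x : 'cV[R]_n) : 0 <= eucl_norm x.
Proof. exact: sqrtr_ge0. Qed.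

Lemma eucl_norm0 : eucl_norm (0 : 'cV[R]_n) = 0.
Proof. by rewrite /eucl_norm big1 ?sqrtr0 // => i _; rewrite mxE expr0n. Qed.

Lemma eucl_norm_eq0 (x : 'cV[R]_n) : eucl_norm x = 0 -> x = 0.
Proof.
rewrite /eucl_norm => /eqP; rewrite sqrtr_eq0 => sum_le0.
have sum_eq0 : \sum_(i < n) x i 0 ^+ 2 = 0.
  by apply/eqP; rewrite eq_le sum_le0 sumr_ge0 // => i _; rewrite sqr_ge0.
apply/matrixP => i j; rewrite ord1 mxE.
move/psumr_eq0P: sum_eq0 => /(_ (fun i _ => sqr_ge0 _)) /(_ i isT) /eqP.
by rewrite sqrf_eq0 => /eqP.
Qed.

End EuclNorm.

Definition scons (T : Type) (i : T) (s : nat -> T) : nat -> T :=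
  fun t => if t is t'.+1 then s t' else i.

Lemma modes_upto_scons (Sigma : finType) (i : Sigma) (s : nat -> Sigma) k :
  modes_upto (scons i s) k.+1 = modes_upto s k ++ [:: i].
Proof.
rewrite /modes_upto /mkseq /= rev_cons cats1; congr (rcons (rev _) _).
by rewrite -[1%N]/(1 + 0)%N iotaDl -map_comp.
Qed.

Section SwitchedSystem.
Variables (R : realType) (Sigma : finType) (n m : nat).
Variables (A : Sigma -> 'M[R]_n) (B : Sigma -> 'M[R]_(n, m)).

Lemma hist_mem_cons Psi x0 (s : nat -> Sigma) k :
  exists y t, hist_mem A B Psi x0 s k = y :: t.
Proof. by case: k => [|k] /=; eauto. Qed.

Lemma head_hist_mem_cat Psi x0 x1 (s : nat -> Sigma) k t :
  head x1 (hist_mem A B Psi x0 s k ++ t) = traj_mem A B Psi x0 s k.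
Proof. by rewrite /traj_mem; have [y [t' ->]] := hist_mem_cons Psi x0 s k. Qed.

Lemma hist_memS Psi x0 (s : nat -> Sigma) k :
  hist_mem A B Psi x0 s k.+1 =
  (A (s k) *m traj_mem A B Psi x0 s k + B (s k) *m Psi (hist_mem A B Psi x0 s k)
     (modes_upto s k)) :: hist_mem A B Psi x0 s k.
Proof. by []. Qed.

Lemma traj_mem_static Phi x0 (s : nat -> Sigma) k :
  traj_mem A B (fun h _ => Phi (head 0 h)) x0 s k = traj_static A B Phi x0 s k.
Proof.
elim: k => [|k IH] //; rewrite /= -IH /traj_mem /=.
by have [y [t ->]] := hist_mem_cons (fun h _ => Phi (head 0 h)) x0 s k.
Qed.

Lemma IFS_IFS_m : IFS A B -> IFS_m A B.
Proof.
case=> Phi [M [gamma [M_gt0 [gamma_bounds decay]]]].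
exists (fun h _ => Phi (head 0 h)), M, gamma; split=> //; split=> // x0 s k.
by rewrite traj_mem_static.
Qed.

(* Histories and mode strings are stored newest first, so the forgotten initial state [x]
   and mode [i] are appended at the end. *)
Definition shift_mem Psi x (i : Sigma) : seq 'cV[R]_n -> seq Sigma -> 'cV[R]_m :=
  fun h w => Psi (h ++ [:: x]) (w ++ [:: i]).

Lemma hist_mem_scons Psi x i (s : nat -> Sigma) k :
  hist_mem A B (shift_mem Psi x i) (A i *m x + B i *m Psi [:: x] [::]) s k ++ [:: x]
  = hist_mem A B Psi x (scons i s) k.+1.
Proof.
elim: k => [|k IH] //.
rewrite hist_memS [in RHS]hist_memS -IH modes_upto_scons.
by rewrite [traj_mem _ _ Psi _ _ _]/traj_mem -IH head_hist_mem_cat.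
Qed.

Lemma traj_mem_scons Psi x i (s : nat -> Sigma) k :
  traj_mem A B (shift_mem Psi x i) (A i *m x + B i *m Psi [:: x] [::]) s k =
  traj_mem A B Psi x (scons i s) k.+1.
Proof. by rewrite {2}/traj_mem -hist_mem_scons head_hist_mem_cat. Qed.

Section CostContraction.
Variables (s0 : Sigma) (Psi0 : seq 'cV[R]_n -> seq Sigma -> 'cV[R]_m) (M gamma : R).
Hypotheses (gamma_ge0 : 0 <= gamma) (gamma_lt1 : gamma < 1).
Hypothesis Psi0_decay : forall x0 s k,
  eucl_norm (traj_mem A B Psi0 x0 s k) <= M * gamma ^+ k * eucl_norm x0.

Definition achievable (x : 'cV[R]_n) (b : R) : Prop :=
  exists Psi, forall s k, eucl_norm (traj_mem A B Psi x s k) <= b * gamma ^+ k.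

Definition cost x : R := inf (achievable x).

Lemma achievable_ge x b : achievable x b -> eucl_norm x <= b.
Proof. by case=> Psi /(_ (fun _ => s0) 0%N); rewrite expr0 mulr1. Qed.

Lemma achievable_Psi0 x : achievable x (M * eucl_norm x).
Proof. by exists Psi0 => s k; rewrite mulrAC; apply: Psi0_decay. Qed.

Lemma achievable_lbound x : has_lbound (achievable x).
Proof. by exists 0 => b /achievable_ge; apply: le_trans; apply: eucl_norm_ge0. Qed.

Lemma cost_le x b : achievable x b -> cost x <= b.
Proof. by move=> achb; apply: (ge_inf (achievable_lbound x)). Qed.

Lemma cost_ge x : eucl_norm x <= cost x.
Proof.
apply: lb_le_inf => [|b /achievable_ge //].
by exists (M * eucl_norm x); apply: achievable_Psi0.
Qed.

Lemma achievable0 : achievable 0 0.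
Proof.
exists (fun _ _ => 0) => s k; rewrite mul0r.
suff -> : traj_mem A B (fun _ _ => 0) 0 s k = 0 by rewrite eucl_norm0.
elim: k => [|k IH] //=; rewrite /traj_mem /= -/(traj_mem _ _ _ _ _ _) IH.
by rewrite !mulmx0 addr0.
Qed.

Definition slack : R := 2 / (1 + gamma).
Definition rate : R := gamma * slack.

Lemma gamma1_gt0 : 0 < 1 + gamma.
Proof. by rewrite ltr_pwDl. Qed.

Lemma slack_gt1 : 1 < slack.
Proof.
by rewrite /slack ltr_pdivlMr ?gamma1_gt0 // mul1r -[2]/(1 + 1) ltrD2l.
Qed.

Lemma rate_ge0 : 0 <= rate.
Proof. by rewrite mulr_ge0 // ltW // (lt_trans ltr01 slack_gt1). Qed.

Lemma rate_lt1 : rate < 1.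
Proof.
rewrite /rate /slack mulrA ltr_pdivrMr ?gamma1_gt0 // mul1r mulrC.
by rewrite -[2]/(1 + 1) mulrDl mul1r ltrD2r.
Qed.

Lemma achievable_near_cost x : exists2 b, achievable x b & b <= slack * cost x.
Proof.
have cost_ge0 : 0 <= cost x := le_trans (eucl_norm_ge0 x) (cost_ge x).
have [cost_gt0 | cost_le0] := ltrP 0 (cost x).
  have eps_gt0 : 0 < (slack - 1) * cost x by rewrite mulr_gt0 // subr_gt0 slack_gt1.
  have inf_ach : has_inf (achievable x).
    by split; [exists (M * eucl_norm x); apply: achievable_Psi0 | apply: achievable_lbound].
  have [b achb b_lt] := inf_adherent eps_gt0 inf_ach.
  by exists b => //; apply: ltW; rewrite mulrBl mul1r addrCA subrr addr0 in b_lt.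
have cost0 : cost x = 0 by apply/eqP; rewrite eq_le cost_le0 cost_ge0.
have x0 : x = 0.
  by apply: eucl_norm_eq0; apply/eqP; rewrite eq_le eucl_norm_ge0 -cost0 cost_ge.
by exists 0; [rewrite x0; exact: achievable0 | rewrite cost0 mulr0].
Qed.

Lemma cost_contraction x :
  exists u, forall i, cost (A i *m x + B i *m u) <= rate * cost x.
Proof.
have [b [Psi Psi_b] b_le] := achievable_near_cost x.
exists (Psi [:: x] [::]) => i.
have achi : achievable (A i *m x + B i *m Psi [:: x] [::]) (b * gamma).
  exists (shift_mem Psi x i) => s k.
  by rewrite traj_mem_scons -mulrA -exprS; apply: Psi_b.
by apply: le_trans (cost_le achi) _; rewrite /rate mulrC -mulrA ler_wpM2l.
Qed.

Lemma static_feedback_UES :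
  exists Phi, forall x0 s k,
    eucl_norm (traj_static A B Phi x0 s k) <= M * rate ^+ k * eucl_norm x0.
Proof.
have [Phi Phi_contr] := choice cost_contraction.
exists Phi => x0 s k.
have cost_traj : cost (traj_static A B Phi x0 s k) <= rate ^+ k * cost x0.
  elim: k => [|k IH]; first by rewrite expr0 mul1r.
  apply: le_trans (Phi_contr _ _) _.
  by rewrite exprS -mulrA ler_wpM2l ?rate_ge0.
apply: le_trans (cost_ge _) (le_trans cost_traj _).
rewrite [M * _]mulrC -mulrA ler_wpM2l ?exprn_ge0 ?rate_ge0 //.
exact/cost_le/achievable_Psi0.
Qed.

End CostContraction.

Lemma IFS_m_IFS : (0 < #|Sigma|)%N -> IFS_m A B -> IFS A B.
Proof.
move=> /card_gt0P [s0 _] [Psi [M [gamma [M_gt0 [/andP [gamma_ge0 gamma_lt1] decay]]]]].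
have [Phi Phi_decay] := static_feedback_UES s0 gamma_ge0 gamma_lt1 decay.
exists Phi, M, (rate gamma); split=> //; split=> //.
by rewrite rate_ge0 ?rate_lt1.
Qed.

End SwitchedSystem.

Theorem theorem1 (R : realType) (Sigma : finType) (n m : nat)
    (A : Sigma -> 'M[R]_n) (B : Sigma -> 'M[R]_(n, m)) :
  (0 < #|Sigma|)%N ->
  (IFS A B <-> IFS_m A B).
Proof. by move=> Sigma_gt0; split; [exact: IFS_IFS_m | exact: IFS_m_IFS]. Qed.
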